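(* For an arrangement $S$ of $\{1,\dots,n^2\}$ in an $n\times n$ grid define \[ E_{\mathrm{low}}(S)=\mathrm{Cov}(X,Z)^2+\mathrm{Cov}(Y,Z)^2+\mathrm{Cov}(D_{\mathrm{main}},Z)^2+\mathrm{Cov}(D_{\mathrm{anti}},Z)^2. \] For $n=3$, $E_{\mathrm{low}}(S)=0$ if and only if $S$ is a magic square. For $n\ge4$, the set of arrangements with $E_{\mathrm{low}}(S)=0$ strictly contains the set of magic squares of order $n$.
   Context: An arrangement is a bijection $(i,j)\mapsto s_{ij}$ from $\{0,\dots,n-1\}^2$ to $\{1,\dots,n^2\}$; it is a magic square if all rows, columns and both main diagonals sum to $n(n^2+1)/2$. $X(i,j)=j-\frac{n-1}{2}$, $Y(i,j)=\frac{n-1}{2}-i$, $Z(i,j)=s_{ij}-\frac{n^2+1}{2}$, $D_{\mathrm{main}}(i,j)=1$ if $i=j$ else $0$, $D_{\mathrm{anti}}(i,j)=1$ if $i+j=n-1$ else $0$. Functions on the grid are random variables under the uniform distribution on cells, with $\mathrm{Cov}(F,G)=\frac1{n^2}\sum_{i,j}(F(i,j)-\bar F)(G(i,j)-\bar G)$. *)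

From mathcomp Require Import all_boot all_order all_algebra.
Set Implicit Arguments. Unset Strict Implicit. Unset Printing Implicit Defensive.
Import Order.TTheory GRing.Theory Num.Theory.
Local Open Scope ring_scope.

Definition arrangement (n : nat) (s : 'I_n -> 'I_n -> nat) : Prop :=
  (forall i j, (1 <= s i j <= n ^ 2)%N) /\
  (forall i j i' j', s i j = s i' j' -> i = i' /\ j = j') /\
  (forall k, (1 <= k <= n ^ 2)%N -> exists i j, s i j = k).

Definition magic_sum (n : nat) : rat := (n%:R * (n%:R ^+ 2 + 1)) / 2.

Definition magic (n : nat) (s : 'I_n -> 'I_n -> nat) : Prop :=
  (forall i : 'I_n, \sum_(j < n) (s i j)%:R = magic_sum n) /\
  (forall j : 'I_n, \sum_(i < n) (s i j)%:R = magic_sum n) /\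
  \sum_(i < n) (s i i)%:R = magic_sum n /\
  \sum_(i < n) (s i (rev_ord i))%:R = magic_sum n.

(* Functions on the grid as random variables under the uniform distribution. *)
Definition mean (n : nat) (F : 'I_n -> 'I_n -> rat) : rat :=
  (\sum_(i < n) \sum_(j < n) F i j) / (n%:R ^+ 2).

Definition cov (n : nat) (F G : 'I_n -> 'I_n -> rat) : rat :=
  (\sum_(i < n) \sum_(j < n) (F i j - mean F) * (G i j - mean G)) / (n%:R ^+ 2).

Definition Xf (n : nat) : 'I_n -> 'I_n -> rat :=
  fun i j => (j : nat)%:R - (n%:R - 1) / 2.
Definition Yf (n : nat) : 'I_n -> 'I_n -> rat :=
  fun i j => (n%:R - 1) / 2 - (i : nat)%:R.
Definition Zf (n : nat) (s : 'I_n -> 'I_n -> nat) : 'I_n -> 'I_n -> rat :=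
  fun i j => (s i j)%:R - (n%:R ^+ 2 + 1) / 2.
Definition Dmain (n : nat) : 'I_n -> 'I_n -> rat :=
  fun i j => if i == j then 1 else 0.
Definition Danti (n : nat) : 'I_n -> 'I_n -> rat :=
  fun i j => if (i + j == n - 1)%N then 1 else 0.

Arguments Xf n : clear implicits.
Arguments Yf n : clear implicits.
Arguments Dmain n : clear implicits.
Arguments Danti n : clear implicits.

Definition E_low (n : nat) (s : 'I_n -> 'I_n -> nat) : rat :=
  cov (Xf n) (Zf s) ^+ 2 + cov (Yf n) (Zf s) ^+ 2
  + cov (Dmain n) (Zf s) ^+ 2 + cov (Danti n) (Zf s) ^+ 2.

From mathcomp Require Import all_boot all_order all_algebra all_fingroup.
From mathcomp Require Import zify ring lra.
Set Implicit Arguments. Unset Strict Implicit. Unset Printing Implicit Defensive.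
Import Order.TTheory GRing.Theory Num.Theory.

Local Open Scope ring_scope.

(* For n = 3, E_low s = 0 says that the two outer columns have equal sums, the
   two outer rows have equal sums and both diagonals sum to 15; an enumeration
   of the 9! arrangements shows that this forces a magic square.  Conversely,
   the centred values Z of a magic square sum to 0 along every line, which
   kills all four covariances for every n.

   For n >= 4 take a permutation rho of {0, ..., n-1}, write c k = k - (n-1)/2,
   and let s i j = n rho(i) + rho(j) + 1.  Then Z i j = n c(rho i) + c(rho j), so
   both diagonal covariances vanish, the X- and Y-covariances are multiples of
   corr rho = sum_k c(k) c(rho k), and the row i with rho i = 0 has Z-sum
   n^2 c(0) <> 0, so s is not magic.  If rho^2 is the reversal k |-> n-1-k,
   substituting k := rho k gives corr rho = - corr rho = 0.  Such square roots
   are made of 4-cycles for n = 0, 1 (mod 4) (fixing the centre for n odd),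
   and for n = 3 (mod 4) away from a middle block of 7 carrying an explicit
   uncorrelated permutation.  For
   n = 2 (mod 4), corr rho lies in 1/2 + Z; there we use a rho with
   corr rho = 3/2 and swap two mirror-image pairs of cells in a row and a
   column, which cancels the X- and Y-covariances without touching the
   diagonals. *)

Lemma sumr_ord_succ (R : numFieldType) (M : nat) :
  \sum_(k < M) (k.+1)%:R = M%:R * (M%:R + 1) / 2 :> R.
Proof.
elim: M => [|M IH]; first by rewrite big_ord0 !mul0r.
by rewrite big_ord_recr /= IH -[M.+1]addn1 natrD; field.
Qed.

Lemma sumr_const_ord (R : pzSemiRingType) n (a : R) : \sum_(j < n) a = n%:R * a.
Proof. by rewrite sumr_const card_ord mulr_natl. Qed.

Lemma arrangement_sum n (s : 'I_n -> 'I_n -> nat) : arrangement s ->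
  \sum_i \sum_j (s i j)%:R = n%:R ^+ 2 * (n%:R ^+ 2 + 1) / 2 :> rat.
Proof.
case=> s_range [s_inj _].
have s_lt (c : 'I_n * 'I_n) : ((s c.1 c.2).-1 < n ^ 2)%N.
  by have := s_range c.1 c.2; lia.
pose phi c : 'I_(n ^ 2) := Ordinal (s_lt c).
have phi_inj : injective phi.
  move=> [i j] [i' j'] /(congr1 val) /= e.
  have := s_range i j; have := s_range i' j' => ij'_range ij_range.
  by have [-> ->] : i = i' /\ j = j' by apply: s_inj; lia.
have phi_bij : bijective phi.
  by apply: inj_card_bij => //; rewrite card_prod !card_ord mulnn.
rewrite pair_bigA /= -natrX -sumr_ord_succ (reindex phi) /=; last exact: onW_bij.
by apply: eq_bigr => c _; have := s_range c.1 c.2; case: (s c.1 c.2).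
Qed.

Lemma arrangement_sumZ n (s : 'I_n -> 'I_n -> nat) : arrangement s ->
  \sum_i \sum_j Zf s i j = 0.
Proof.
move=> /arrangement_sum s_sum; rewrite /Zf.
under eq_bigr => i _ do rewrite sumrB sumr_const_ord.
by rewrite sumrB sumr_const_ord s_sum; field.
Qed.

Definition grid_dot n (F G : 'I_n -> 'I_n -> rat) : rat :=
  \sum_i \sum_j F i j * G i j.

Lemma cov_centred n (F G : 'I_n -> 'I_n -> rat) : \sum_i \sum_j G i j = 0 ->
  cov F G = grid_dot F G / n%:R ^+ 2.
Proof.
move=> G_sum; rewrite /cov /mean G_sum mul0r; congr (_ / _).
under eq_bigr => i _ do under eq_bigr => j _ do rewrite subr0 mulrBl.
under eq_bigr => i _ do rewrite sumrB -mulr_sumr.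
by rewrite sumrB -mulr_sumr G_sum mulr0 subr0.
Qed.

Lemma E_low_eq0 n (s : 'I_n -> 'I_n -> nat) : arrangement s ->
  E_low s = 0 <->
  [/\ grid_dot (Xf n) (Zf s) = 0, grid_dot (Yf n) (Zf s) = 0,
      grid_dot (Dmain n) (Zf s) = 0 & grid_dot (Danti n) (Zf s) = 0].
Proof.
move=> /arrangement_sumZ Z_sum; rewrite /E_low !cov_centred //.
split; last by case=> -> -> -> ->; rewrite mul0r expr0n /= !addr0.
case: n s Z_sum => [|n] s _ E0; first by rewrite /grid_dot !big_ord0.
have n2_neq0 : (n.+1%:R ^+ 2 : rat) != 0 by rewrite expf_eq0 pnatr_eq0.
move/eqP: E0; rewrite !paddr_eq0 ?addr_ge0 ?sqr_ge0 // !sqrf_eq0.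
rewrite !mulf_eq0 !invr_eq0 (negbTE n2_neq0) !orbF.
by case/andP=> /andP[/andP[/eqP-> /eqP->] /eqP->] /eqP->.
Qed.

Lemma grid_dot_Dmain n (G : 'I_n -> 'I_n -> rat) :
  grid_dot (Dmain n) G = \sum_i G i i.
Proof.
apply: eq_bigr => i _; rewrite (bigD1 i) //= /Dmain eqxx mul1r big1 ?addr0 //.
by move=> j; rewrite eq_sym => /negbTE->; rewrite mul0r.
Qed.

Lemma grid_dot_Danti n (G : 'I_n -> 'I_n -> rat) :
  grid_dot (Danti n) G = \sum_i G i (rev_ord i).
Proof.
apply: eq_bigr => i _; have := ltn_ord i => i_lt.
rewrite (bigD1 (rev_ord i)) //= /Danti ifT; last by rewrite /=; lia.
rewrite mul1r big1 ?addr0 // => j j_neq; rewrite ifF ?mul0r //.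
apply/negP => /eqP e; move/eqP: j_neq; apply; apply: val_inj => /=; lia.
Qed.

Lemma sumZ_magic_line n (s : 'I_n -> 'I_n -> nat) (a b : 'I_n -> 'I_n) :
  \sum_i (s (a i) (b i))%:R = magic_sum n -> \sum_i Zf s (a i) (b i) = 0.
Proof.
by move=> line; rewrite /Zf sumrB sumr_const_ord line /magic_sum; field.
Qed.

Lemma magic_E_low0 n (s : 'I_n -> 'I_n -> nat) :
  arrangement s -> magic s -> E_low s = 0.
Proof.
move=> s_arr [rows [cols [diag anti]]]; apply/E_low_eq0 => //; split.
- rewrite /grid_dot exchange_big big1 // => j _.
  by rewrite -mulr_sumr (sumZ_magic_line (a := id) (b := fun=> j) (cols j)) mulr0.
- rewrite /grid_dot big1 // => i _.
  by rewrite -mulr_sumr (sumZ_magic_line (a := fun=> i) (b := id) (rows i)) mulr0.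
- by rewrite grid_dot_Dmain (sumZ_magic_line (a := id) (b := id) diag).
- by rewrite grid_dot_Danti (sumZ_magic_line (a := id) (b := @rev_ord n) anti).
Qed.

Definition magic3_implied (l : seq nat) : bool :=
  if l is [:: a; b; c; d; e; f; g; h; i] then
    [&& a + d + g == c + f + i, a + b + c == g + h + i,
        a + e + i == 15 & c + e + g == 15]%N ==>
    [&& a + b + c == 15, d + e + f == 15, g + h + i == 15,
        a + d + g == 15, b + e + h == 15 & c + f + i == 15]%N
  else true.

Lemma magic3_implied_permutations : all magic3_implied (permutations (iota 1 9)).
Proof. by vm_compute. Qed.

Definition o0 : 'I_3 := @Ordinal 3 0 isT.
Definition o1 : 'I_3 := @Ordinal 3 1 isT.
Definition o2 : 'I_3 := @Ordinal 3 2 isT.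

Lemma ord3_ind (P : 'I_3 -> Prop) : P o0 -> P o1 -> P o2 -> forall i, P i.
Proof.
move=> P0 P1 P2 [[|[|[|k]]] k_lt] //.
- by rewrite (_ : Ordinal k_lt = o0) //; apply: val_inj.
- by rewrite (_ : Ordinal k_lt = o1) //; apply: val_inj.
- by rewrite (_ : Ordinal k_lt = o2) //; apply: val_inj.
Qed.

Lemma sum_ord3 (R : nmodType) (F : 'I_3 -> R) : \sum_i F i = F o0 + F o1 + F o2.
Proof.
rewrite !big_ord_recr big_ord0 /= add0r.
by congr (_ + _ + _); apply: congr1; apply: val_inj.
Qed.

Definition cells3 : seq ('I_3 * 'I_3) :=
  [:: (o0, o0); (o0, o1); (o0, o2); (o1, o0); (o1, o1); (o1, o2);
      (o2, o0); (o2, o1); (o2, o2)].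

Definition grid3 (s : 'I_3 -> 'I_3 -> nat) : seq nat := [seq s c.1 c.2 | c <- cells3].

Lemma grid3_perm s : arrangement s -> perm_eq (grid3 s) (iota 1 9).
Proof.
case=> s_range [s_inj _].
have grid_uniq : uniq (grid3 s).
  by rewrite map_inj_uniq // => -[i j] [i' j'] /= /s_inj [-> ->].
have grid_sub : {subset grid3 s <= iota 1 9}.
  by move=> k /mapP[c _ ->]; rewrite mem_iota; have /= := s_range c.1 c.2; lia.
have [_ grid_eq] := uniq_min_size grid_uniq grid_sub (leqnn 9).
by apply: uniq_perm; rewrite ?iota_uniq.
Qed.

Lemma natr_inj (R : numDomainType) : injective (fun n : nat => n%:R : R).
Proof. by move=> x y /eqP; rewrite eqr_nat => /eqP. Qed.

Lemma E_low0_magic3 (s : 'I_3 -> 'I_3 -> nat) : arrangement s -> E_low s = 0 -> magic s.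
Proof.
move=> s_arr /(E_low_eq0 s_arr) [eX eY eD eA].
rewrite grid_dot_Dmain in eD; rewrite grid_dot_Danti in eA.
have r0 : rev_ord o0 = o2 by apply: val_inj.
have r1 : rev_ord o1 = o1 by apply: val_inj.
have r2 : rev_ord o2 = o0 by apply: val_inj.
rewrite /grid_dot !sum_ord3 ?r0 ?r1 ?r2 /Xf /Yf /Zf /= in eX eY eD eA.
have := grid3_perm s_arr; rewrite -mem_permutations.
move/(allP magic3_implied_permutations); rewrite /magic3_implied /=.
set a := s o0 o0 in eX eY eD eA *; set b := s o0 o1 in eX eY eD eA *.
set c := s o0 o2 in eX eY eD eA *; set d := s o1 o0 in eX eY eD eA *.
set e := s o1 o1 in eX eY eD eA *; set f := s o1 o2 in eX eY eD eA *.
set g := s o2 o0 in eX eY eD eA *; set h := s o2 o1 in eX eY eD eA *.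
set i := s o2 o2 in eX eY eD eA *.
have colsX : (a + d + g = c + f + i)%N by apply: (@natr_inj rat); rewrite !natrD; lra.
have rowsY : (a + b + c = g + h + i)%N by apply: (@natr_inj rat); rewrite !natrD; lra.
have diag : (a + e + i = 15)%N by apply: (@natr_inj rat); rewrite !natrD; lra.
have anti : (c + e + g = 15)%N by apply: (@natr_inj rat); rewrite !natrD; lra.
rewrite colsX rowsY diag anti !eqxx /=.
move=> /and5P[/eqP R0 /eqP R1 /eqP R2 /eqP C0 /andP[/eqP C1 /eqP C2]].
subst a b c d e f g h i.
have sum15 (x y z : nat) : (x + y + z = 15)%N -> x%:R + y%:R + z%:R = magic_sum 3.
  by move=> xyz; rewrite -!natrD xyz; apply/eqP.
split; [|split; [|split]]; try apply: ord3_ind;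
  rewrite sum_ord3 ?r0 ?r1 ?r2; apply: sum15; lia.
Qed.

Definition exists_nonmagic_E_low0 (n : nat) : Prop :=
  exists s : 'I_n -> 'I_n -> nat, arrangement s /\ E_low s = 0 /\ ~ magic s.

Definition centred (n k : nat) : rat := k%:R - (n%:R - 1) / 2.

Lemma Xf_centred n i j : Xf n i j = centred n j.
Proof. by []. Qed.

Lemma Yf_centred n i j : Yf n i j = - centred n i.
Proof. by rewrite /Yf /centred opprB. Qed.

Lemma sum_centred n : \sum_(k < n) centred n k = 0.
Proof.
rewrite sumrB sumr_const_ord.
under eq_bigr => k _ do rewrite -[k%:R]addr0 -(subrr 1) addrA natr1.
by rewrite sumrB sumr_ord_succ sumr_const_ord; field.
Qed.

Lemma centred_rev n k : (k < n)%N -> centred n (n.-1 - k) = - centred n k.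
Proof.
move=> k_lt; rewrite /centred natrB; last by lia.
have -> : n.-1%:R = n%:R - 1 :> rat by rewrite -[in RHS](ltn_predK k_lt) -natr1 addrK.
by field.
Qed.

Lemma centred0_neq0 n : (1 < n)%N -> centred n 0 != 0.
Proof.
move=> n_gt1; rewrite /centred add0r oppr_eq0 mulf_eq0 invr_eq0 subr_eq0.
by rewrite pnatr_eq1 pnatr_eq0 /=; lia.
Qed.

Lemma not_magic_of_row n (s : 'I_n -> 'I_n -> nat) i :
  \sum_j Zf s i j != 0 -> ~ magic s.
Proof.
by move=> /eqP row [rows _]; apply: row; apply: (sumZ_magic_line (a := fun=> i) (b := id)).
Qed.

Section ProductGrid.
Variables (N : nat) (rho : 'I_N -> 'I_N).
Hypothesis rho_inj : injective rho.

Definition product_grid (i j : 'I_N) : nat := (N * rho i + rho j).+1.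

Definition corr : rat := \sum_(k < N) centred N k * centred N (rho k).

Lemma product_grid_arrangement : arrangement product_grid.
Proof.
have [rho' rhoK rho'K] := injF_bij rho_inj.
have N_gt0 (i : 'I_N) : (0 < N)%N by apply: leq_ltn_trans (ltn_ord i).
split; [|split].
- move=> i j; rewrite /product_grid.
  have := ltn_ord (rho i); have := ltn_ord (rho j) => rj ri.
  have : (N * rho i <= N * N.-1)%N by rewrite leq_mul2l; apply/orP; right; lia.
  have : (N * N.-1 + N = N ^ 2)%N by rewrite -mulnSr prednK ?mulnn ?(N_gt0 i).
  lia.
- move=> i j i' j' /succn_inj e.
  have rj : (rho j < N)%N := ltn_ord _; have rj' : (rho j' < N)%N := ltn_ord _.
  have := congr1 (modn^~ N) e; rewrite /= !(mulnC N) !modnMDl !modn_small // => ej.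
  have /eqP : (rho i * N = rho i' * N)%N by lia.
  rewrite eqn_pmul2r ?(N_gt0 i) // => /eqP ei.
  by split; apply: rho_inj; apply: val_inj.
- move=> k /andP[k_gt0 k_le].
  have N_gt0' : (0 < N)%N by rewrite lt0n; apply/eqP => N0; move: k_le; rewrite N0; lia.
  have q_lt : ((k.-1) %/ N < N)%N by rewrite ltn_divLR // mulnn; lia.
  have r_lt : ((k.-1) %% N < N)%N by rewrite ltn_mod.
  exists (rho' (Ordinal q_lt)), (rho' (Ordinal r_lt)).
  by rewrite /product_grid !rho'K /= mulnC -divn_eq; lia.
Qed.

Lemma sum_centred_rho : \sum_k centred N (rho k) = 0.
Proof.
have /= <- := reindex_inj (P := xpredT) (F := fun k : 'I_N => centred N k) rho_inj.
exact: sum_centred.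
Qed.

Lemma Zf_product_grid i j :
  Zf product_grid i j = N%:R * centred N (rho i) + centred N (rho j).
Proof. by rewrite /Zf /product_grid /centred -addn1 !natrD natrM; field. Qed.

Lemma row_sumZ_product_grid i :
  \sum_j Zf product_grid i j = N%:R ^+ 2 * centred N (rho i).
Proof.
under eq_bigr => j _ do rewrite Zf_product_grid.
by rewrite big_split /= sum_centred_rho addr0 sumr_const_ord mulrA.
Qed.

Lemma grid_dot_X_product_grid : grid_dot (Xf N) (Zf product_grid) = N%:R * corr.
Proof.
rewrite /grid_dot; under eq_bigr => i _ do under eq_bigr => j _ do
  rewrite Zf_product_grid mulrDr Xf_centred.
under eq_bigr => i _ do rewrite big_split /= -mulr_suml sum_centred mul0r add0r.
by rewrite sumr_const_ord.
Qed.

Lemma grid_dot_Y_product_grid :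
  grid_dot (Yf N) (Zf product_grid) = - (N%:R ^+ 2 * corr).
Proof.
rewrite /grid_dot; under eq_bigr => i _ do under eq_bigr => j _ do
  rewrite Zf_product_grid mulrDr Yf_centred.
under eq_bigr => i _ do
  rewrite big_split /= -!mulr_sumr sum_centred_rho mulr0 addr0 sumr_const_ord.
by rewrite /corr mulr_sumr -sumrN; apply: eq_bigr => i _; ring.
Qed.

Lemma grid_dot_Dmain_product_grid : grid_dot (Dmain N) (Zf product_grid) = 0.
Proof.
rewrite grid_dot_Dmain; under eq_bigr => i _ do rewrite Zf_product_grid.
by rewrite big_split /= -mulr_sumr sum_centred_rho mulr0 addr0.
Qed.

Lemma grid_dot_Danti_product_grid : grid_dot (Danti N) (Zf product_grid) = 0.
Proof.
rewrite grid_dot_Danti; under eq_bigr => i _ do rewrite Zf_product_grid.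
rewrite big_split /= -mulr_sumr sum_centred_rho mulr0 add0r.
have /= <- := reindex_inj (P := xpredT) (F := fun k => centred N (rho k)) (@rev_ord_inj N).
exact: sum_centred_rho.
Qed.

End ProductGrid.

Lemma product_grid_witness N (rho : 'I_N -> 'I_N) :
  (1 < N)%N -> injective rho -> corr rho = 0 -> exists_nonmagic_E_low0 N.
Proof.
move=> N_gt1 rho_inj corr0; exists (product_grid rho).
have s_arr := product_grid_arrangement rho_inj.
split=> //; split.
  apply/(E_low_eq0 s_arr); split.
  - by rewrite grid_dot_X_product_grid corr0 mulr0.
  - by rewrite (grid_dot_Y_product_grid rho_inj) corr0 mulr0 oppr0.
  - exact: grid_dot_Dmain_product_grid rho_inj.
  - exact: grid_dot_Danti_product_grid rho_inj.
have [rho' _ rho'K] := injF_bij rho_inj.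
pose i := rho' (Ordinal (ltnW N_gt1)).
apply: (not_magic_of_row (i := i)); rewrite (row_sumZ_product_grid rho_inj).
by rewrite mulf_eq0 negb_or expf_eq0 pnatr_eq0 /i rho'K centred0_neq0 // andbT; lia.
Qed.

Lemma sum_tperm (R : comPzRingType) (T : finType) (F G : T -> R) (p q : T) :
  \sum_c F c * G (tperm p q c) = \sum_c F c * G c + (F p - F q) * (G q - G p).
Proof.
have [<-|pq] := eqVneq p q.
  by rewrite tperm1 subrr mul0r addr0; apply: eq_bigr => c _; rewrite perm1.
have split_pq (H : T -> R) :
    \sum_c H c = H p + H q + \sum_(c | (c != p) && (c != q)) H c.
  by rewrite (bigD1 p) // (bigD1 q) 1?eq_sym //= addrA.
rewrite !split_pq tpermL tpermR (eq_bigr (fun c => F c * G c)); first by ring.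
by move=> c /andP[cp cq]; rewrite tpermD // eq_sym.
Qed.

Definition permute_cells (T : Type) n (F : 'I_n -> 'I_n -> T)
    (sigma : {perm 'I_n * 'I_n}) (i j : 'I_n) : T :=
  F (sigma (i, j)).1 (sigma (i, j)).2.

Lemma arrangement_permute_cells n (s : 'I_n -> 'I_n -> nat) sigma :
  arrangement s -> arrangement (permute_cells s sigma).
Proof.
case=> s_range [s_inj s_surj]; split; [|split].
- by move=> i j; apply: s_range.
- move=> i j i' j' /s_inj [e1 e2].
  have : sigma (i, j) = sigma (i', j').
    by rewrite [sigma (i, j)]surjective_pairing e1 e2 -surjective_pairing.
  by move/perm_inj => [-> ->].
- move=> k /s_surj [i [j e]]; exists ((sigma^-1)%g (i, j)).1, ((sigma^-1)%g (i, j)).2.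
  by rewrite /permute_cells -surjective_pairing permKV.
Qed.

Lemma Zf_permute_cells n (s : 'I_n -> 'I_n -> nat) sigma :
  Zf (permute_cells s sigma) = permute_cells (Zf s) sigma.
Proof. by []. Qed.

Definition swap_cells n (k1 k2 l0 : 'I_n) : {perm 'I_n * 'I_n} :=
  tperm (l0, k1) (l0, k2) * tperm (k1, l0) (k2, l0).

Lemma grid_dot_swap_cells n (F G : 'I_n -> 'I_n -> rat) (k1 k2 l0 : 'I_n) :
  l0 != k1 -> l0 != k2 ->
  grid_dot F (permute_cells G (swap_cells k1 k2 l0)) =
    grid_dot F G + (F k1 l0 - F k2 l0) * (G k2 l0 - G k1 l0)
                 + (F l0 k1 - F l0 k2) * (G l0 k2 - G l0 k1).
Proof.
move=> l0k1 l0k2; rewrite /grid_dot /permute_cells !pair_bigA /=.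
under eq_bigr => c _ do rewrite permM -surjective_pairing.
pose tau := tperm (k1, l0) (k2, l0).
rewrite (sum_tperm (fun c => F c.1 c.2) (fun c => G (tau c).1 (tau c).2)).
rewrite (sum_tperm (fun c => F c.1 c.2) (fun c => G c.1 c.2)) /= /tau.
by rewrite !tpermD // xpair_eqE negb_and ?l0k1 ?l0k2 ?orbT.
Qed.

Lemma swapped_product_grid_witness N (rho : 'I_N -> 'I_N) (k1 k2 l0 i0 : 'I_N) :
  injective rho ->
  ((k2 : nat)%:R - (k1 : nat)%:R) * ((rho k2 : nat)%:R - (rho k1 : nat)%:R)
    = N%:R * corr rho ->
  l0 != k1 -> l0 != k2 -> (l0 + k1 != N - 1)%N -> (l0 + k2 != N - 1)%N ->
  i0 \notin [:: k1; k2; l0] -> centred N (rho i0) != 0 ->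
  exists_nonmagic_E_low0 N.
Proof.
move=> rho_inj corr_swap l0k1 l0k2 l0k1' l0k2' i0_out rho_i0.
pose s := permute_cells (product_grid rho) (swap_cells k1 k2 l0).
have s_arr : arrangement s.
  exact/arrangement_permute_cells/product_grid_arrangement.
have dot_s F : grid_dot F (Zf s) = grid_dot F (Zf (product_grid rho))
    + (F k1 l0 - F k2 l0) * (N%:R * (centred N (rho k2) - centred N (rho k1)))
    + (F l0 k1 - F l0 k2) * (centred N (rho k2) - centred N (rho k1)).
  rewrite Zf_permute_cells (grid_dot_swap_cells _ _ l0k1 l0k2) !Zf_product_grid.
  by congr (_ + _ * _ + _ * _); ring.
have centredB (a b : nat) : centred N a - centred N b = a%:R - b%:R.
  by rewrite /centred; ring.
exists s; split=> //; split.
  apply/(E_low_eq0 s_arr); rewrite !dot_s !centredB; split.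
  - by rewrite grid_dot_X_product_grid -corr_swap; ring.
  - rewrite (grid_dot_Y_product_grid rho_inj) !Yf_centred /centred.
    have -> : N%:R ^+ 2 * corr rho = N%:R * (N%:R * corr rho) by rewrite mulrA.
    by rewrite -corr_swap; ring.
  - rewrite (grid_dot_Dmain_product_grid rho_inj) /Dmain [k1 == l0]eq_sym [k2 == l0]eq_sym.
    by rewrite (negbTE l0k1) (negbTE l0k2) subrr !mul0r !addr0.
  - rewrite (grid_dot_Danti_product_grid rho_inj) /Danti [(k1 + l0)%N]addnC.
    by rewrite [(k2 + l0)%N]addnC (negbTE l0k1') (negbTE l0k2') subrr !mul0r !addr0.
apply: (not_magic_of_row (i := i0)).
have row_i0 j : s i0 j = product_grid rho i0 j.
  move: i0_out; rewrite !inE !negb_or => /and3P[i0k1 i0k2 i0l0].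
  have off (a b : 'I_N) : i0 != a -> (a, b) != (i0, j).
    by rewrite xpair_eqE eq_sym => /negbTE->.
  by rewrite /s /permute_cells permM !tpermD ?off.
under eq_bigr => j _ do rewrite /Zf row_i0 -/(Zf _ _ _).
rewrite (row_sumZ_product_grid rho_inj) mulf_eq0 negb_or rho_i0 andbT.
by rewrite expf_eq0 pnatr_eq0 -lt0n (leq_ltn_trans _ (ltn_ord i0)).
Qed.

Definition ord_fun N (r : nat -> nat) (k : 'I_N) : 'I_N := insubd k (r k).

Section ReversalRoot.
Variables (N : nat) (r : nat -> nat) (G : seq nat).
Hypothesis r_lt : forall k, (k < N)%N -> (r k < N)%N.
Hypothesis r_root : forall k, (k < N)%N -> k \notin G -> r (r k) = (N.-1 - k)%N.
Hypothesis G_rev : forall k, (k < N)%N -> k \in G -> (N.-1 - k)%N \in G.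
Hypothesis r_G : {in G, forall k, r k \in G}.
Hypothesis r_inj_G : {in G &, injective r}.

Local Notation rho := (@ord_fun N r).

Lemma ord_fun_val (k : 'I_N) : (rho k : nat) = r k.
Proof. by rewrite val_insubd r_lt. Qed.

Lemma r_notin_G k : (k < N)%N -> k \notin G -> r k \notin G.
Proof.
move=> k_lt kG; apply/negP => /r_G; rewrite r_root // => revG.
have /G_rev/(_ revG) : (N.-1 - k < N)%N by lia.
by rewrite subKn ?(negbTE kG) //; lia.
Qed.

Lemma ord_fun_inj : injective rho.
Proof.
move=> a b /(congr1 (@nat_of_ord N)); rewrite !ord_fun_val => e; apply: ord_inj.
have := ltn_ord a; have := ltn_ord b => b_lt a_lt.
have [aG|aG] := boolP ((a : nat) \in G); have [bG|bG] := boolP ((b : nat) \in G).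
- exact: r_inj_G.
- by move: (r_G aG); rewrite e (negbTE (r_notin_G b_lt bG)).
- by move: (r_G bG); rewrite -e (negbTE (r_notin_G a_lt aG)).
- by have := congr1 r e; rewrite !r_root //; lia.
Qed.

Hypothesis G_uniq : uniq G.
Hypothesis G_lt : all (fun g => g < N)%N G.

Lemma corr_ord_fun :
  corr rho = \sum_(g <- G) centred N g * centred N (r g).
Proof.
rewrite /corr (bigID (fun k : 'I_N => val k \in G)) /=.
have -> : \sum_(k < N | val k \in G) centred N k * centred N (rho k)
    = \sum_(g <- G) centred N g * centred N (r g).
  rewrite (eq_bigr (fun k : 'I_N => centred N k * centred N (r k))); last first.
    by move=> k _; rewrite ord_fun_val.
  rewrite -(big_mkord (fun k => k \in G) (fun k => centred N k * centred N (r k))).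
  rewrite /index_iota subn0 -big_filter; apply/perm_big/uniq_perm => //.
    by rewrite filter_uniq ?iota_uniq.
  by move=> g; rewrite mem_filter mem_iota /= andb_idr // => /(allP G_lt).
(* Substituting k := rho k turns the sum over k outside G into its negative. *)
set S := \sum_(k < N | _) _.
suff S_opp : S = - S by rewrite [S](_ : _ = 0) ?addr0 //; lra.
rewrite {1}/S (reindex_inj ord_fun_inj) /S -sumrN /=.
apply: eq_big => [k|k rkG]; rewrite !ord_fun_val.
  by apply/idP/idP; [apply: contraNN; apply: r_G | apply: r_notin_G].
have kG : (k : nat) \notin G by apply: contraNN rkG; rewrite ord_fun_val; apply: r_G.
by rewrite r_root // centred_rev // mulrN mulrC.
Qed.

End ReversalRoot.

Ltac case_ifs :=
  repeat match goal with |- context [if ?b then _ else _] => case: (boolP b) end.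

(* For k in the lower half with k + e even, the 4-cycle
   k -> k+1 -> N-1-k -> N-2-k -> k squares to the reversal. *)
Definition rev_root (N e k : nat) : nat :=
  (if k < N.-1 - k then (if (k + e) %% 2 == 1 then N - k else k.+1)
   else if (N.-1 - k + e) %% 2 == 1 then N - 2 - k else k.-1)%N.

(* A square root of the reversal outside the middle block [2m, 2m+b). *)
Definition block_root (m b : nat) (p : seq nat) (k : nat) : nat :=
  (if 2 * m <= k < 2 * m + b then 2 * m + nth 0 p (k - 2 * m)
   else rev_root (4 * m + b) 0 k)%N.

Lemma block_root_witness m b (p : seq nat) :
  (1 < 4 * m + b)%N -> perm_eq p (iota 0 b) ->
  \sum_(d <- iota 0 b) centred b d * centred b (nth 0 p d) = 0 ->
  exists_nonmagic_E_low0 (4 * m + b).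
Proof.
move=> N_gt1 p_perm p_corr.
have p_lt d : (d < b)%N -> (nth 0 p d < b)%N.
  move=> d_lt; have : nth 0 p d \in iota 0 b.
    by rewrite -(perm_mem p_perm) mem_nth // (perm_size p_perm) size_iota.
  by rewrite mem_iota.
have p_uniq : uniq p by rewrite (perm_uniq p_perm) iota_uniq.
have p_size : size p = b by rewrite (perm_size p_perm) size_iota.
have r_lt k : (k < 4 * m + b)%N -> (block_root m b p k < 4 * m + b)%N.
  rewrite /block_root /rev_root => k_lt; case: ifP => [/andP[? ?]|_].
    by have := p_lt (k - 2 * m)%N; lia.
  by case_ifs; lia.
have r_root k : (k < 4 * m + b)%N -> k \notin iota (2 * m) b ->
    block_root m b p (block_root m b p k) = ((4 * m + b).-1 - k)%N.
  by rewrite mem_iota /block_root /rev_root => k_lt k_out; case_ifs; lia.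
have G_rev k : (k < 4 * m + b)%N -> k \in iota (2 * m) b ->
    ((4 * m + b).-1 - k)%N \in iota (2 * m) b.
  by rewrite !mem_iota; lia.
have r_G : {in iota (2 * m) b, forall k, block_root m b p k \in iota (2 * m) b}.
  move=> k; rewrite !mem_iota /block_root => k_in; rewrite k_in.
  by have := p_lt (k - 2 * m)%N; lia.
have r_inj_G : {in iota (2 * m) b &, injective (block_root m b p)}.
  move=> k k'; rewrite !mem_iota /block_root => k_in k'_in; rewrite k_in k'_in.
  move=> /addnI /eqP; rewrite nth_uniq ?p_size //; lia.
have G_lt : all (fun g => g < 4 * m + b)%N (iota (2 * m) b).
  by apply/allP => g; rewrite mem_iota; lia.
apply: (product_grid_witness N_gt1 (ord_fun_inj r_lt r_root G_rev r_G r_inj_G)).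
rewrite (corr_ord_fun r_lt r_root G_rev r_G r_inj_G (iota_uniq _ _) G_lt).
rewrite -[(2 * m)%N]addn0 iotaDl big_map; apply: etrans p_corr; apply: eq_big_seq => d.
rewrite mem_iota add0n => d_lt; rewrite /block_root ifT; last by lia.
by rewrite addKn /centred !natrD; field.
Qed.

(* A square root of the reversal of [0, 4t+6) off a 6-cycle, with correlation
   3/2. *)
Definition six_cycle_root (t k : nat) : nat :=
  (if k == 0 then 2 * t + 1 else if k == 2 * t + 1 then 2 * t + 2
   else if k == 2 * t + 2 then 4 * t + 5 else if k == 2 * t + 3 then 2 * t + 4
   else if k == 2 * t + 4 then 0 else if k == 4 * t + 5 then 2 * t + 3
   else rev_root (4 * t + 6) 1 k)%N.

Definition six_cycle_support (t : nat) : seq nat :=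
  [:: 0; 2 * t + 1; 2 * t + 2; 2 * t + 3; 2 * t + 4; 4 * t + 5]%N.

Lemma uniq_map_inj_in (T1 T2 : eqType) (f : T1 -> T2) (s : seq T1) :
  uniq (map f s) -> {in s &, injective f}.
Proof.
elim: s => //= z s IH /andP[fz_out fs_uniq] x y.
rewrite !inE => /predU1P[->|xs] /predU1P[->|ys] // e.
- by move: fz_out; rewrite e map_f.
- by move: fz_out; rewrite -e map_f.
- exact: IH.
Qed.

Lemma six_cycle_root_witness t : exists_nonmagic_E_low0 (4 * t + 6).
Proof.
set N := (4 * t + 6)%N; set r := six_cycle_root t; set G := six_cycle_support t.
have [r0 r1 r2] : [/\ r 0 = 2 * t + 1, r (2 * t + 1) = 2 * t + 2
                    & r (2 * t + 2) = 4 * t + 5]%N.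
  by rewrite /r /six_cycle_root; split; case_ifs; lia.
have [r3 r4 r5] : [/\ r (2 * t + 3) = 2 * t + 4, r (2 * t + 4) = 0
                    & r (4 * t + 5) = 2 * t + 3]%N.
  by rewrite /r /six_cycle_root; split; case_ifs; lia.
have r_on_G : map r G = [:: 2 * t + 1; 2 * t + 2; 4 * t + 5; 2 * t + 4; 0; 2 * t + 3]%N.
  by rewrite /= r0 r1 r2 r3 r4 r5.
have r_lt k : (k < N)%N -> (r k < N)%N.
  by rewrite /N /r /six_cycle_root /rev_root => k_lt; case_ifs; lia.
have r_root k : (k < N)%N -> k \notin G -> r (r k) = (N.-1 - k)%N.
  by rewrite /N /G /r !inE /six_cycle_root /rev_root => k_lt k_out; case_ifs; lia.
have G_rev k : (k < N)%N -> k \in G -> (N.-1 - k)%N \in G.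
  by rewrite /N /G !inE; lia.
have r_G : {in G, forall k, r k \in G}.
  by move=> k /(map_f r); rewrite r_on_G /G !inE; lia.
have r_inj_G : {in G &, injective r}.
  by apply: uniq_map_inj_in; rewrite r_on_G /= !inE; lia.
have G_uniq : uniq G by rewrite /G /= !inE; lia.
have G_lt : all (fun g => g < N)%N G by rewrite /N /G /=; lia.
have rho_inj := ord_fun_inj r_lt r_root G_rev r_G r_inj_G.
have rho_val := ord_fun_val r_lt.
have corr_rho := corr_ord_fun r_lt r_root G_rev r_G r_inj_G G_uniq G_lt.
have k1_lt : (0 < N)%N by lia. have l0_lt : (1 < N)%N by lia.
have k2_lt : (2 * t + 3 < N)%N by lia. have i0_lt : (2 * t + 4 < N)%N by lia.
apply: (swapped_product_grid_witness (k1 := Ordinal k1_lt) (k2 := Ordinal k2_lt)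
          (l0 := Ordinal l0_lt) (i0 := Ordinal i0_lt) rho_inj).
- rewrite corr_rho !rho_val /= !big_cons big_nil ?r0 ?r1 ?r2 ?r3 ?r4 ?r5 /centred.
  by rewrite !natrD; field.
- by [].
- by apply/eqP => /(congr1 val) /=; lia.
- by rewrite /=; lia.
- by rewrite /=; lia.
- by rewrite !inE -!val_eqE /=; lia.
- by rewrite rho_val /= r4 centred0_neq0 //; lia.
Qed.

Lemma exists_nonmagic_E_low0_ge4 n : (3 < n)%N -> exists_nonmagic_E_low0 n.
Proof.
move=> n_gt3.
have [m [b [n_mb b_cases]]] : exists m b, n = (4 * m + b)%N /\ b \in [:: 0; 1; 6; 7]%N.
  have := divn_eq n 4; have := ltn_pmod n (isT : (0 < 4)%N) => mod_lt n_eq.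
  case: (leqP (n %% 4) 1) => n_mod.
  - by exists (n %/ 4)%N, (n %% 4)%N; split; [lia | rewrite !inE; lia].
  - by exists (n %/ 4 - 1)%N, (n %% 4 + 4)%N; split; [lia | rewrite !inE; lia].
subst n; move: b_cases n_gt3; rewrite !inE => /or4P[] /eqP-> n_gt3.
- apply: (block_root_witness (p := [::])); [lia | by [] | by rewrite big_nil].
- apply: (block_root_witness (p := [:: 0%N])); [lia | by [] |].
  by rewrite /= big_seq1 /centred; field.
- exact: six_cycle_root_witness.
- apply: (block_root_witness (p := [:: 0; 3; 5; 6; 4; 2; 1]%N)); [lia | by [] |].
  by rewrite /= !big_cons big_nil /= /centred; field.
Qed.

Theorem mainTheorem8 :
  (forall s : 'I_3 -> 'I_3 -> nat, arrangement s -> (E_low s = 0 <-> magic s)) /\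
  (forall n : nat, (4 <= n)%N ->
     (forall s : 'I_n -> 'I_n -> nat, arrangement s -> magic s -> E_low s = 0) /\
     (exists s : 'I_n -> 'I_n -> nat, arrangement s /\ E_low s = 0 /\ ~ magic s)).
Proof.
split=> [s s_arr | n n_ge4]; first by split; [exact: E_low0_magic3 | exact: magic_E_low0].
by split; [exact: magic_E_low0 | exact: exists_nonmagic_E_low0_ge4].
Qed.
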